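(* Let $n>2$ and $V=\mathbb{F}_2^n$. The number of elementary abelian regular subgroups $R$ of $\mathrm{Sym}(V)$ such that $R\cap T$ has index $4$ in $T$ is $$t_n=\frac{(2^{n-2}-1)(2^{n-1}-1)(2^n-1)}{3}.$$
   Context: $T=\{\sigma_v:v\in V\}\le\mathrm{Sym}(V)$ is the group of translations $\sigma_v:x\mapsto x+v$. *)

From HB Require Import structures.
From mathcomp Require Import all_boot all_order all_algebra all_fingroup all_solvable.
Set Implicit Arguments. Unset Strict Implicit. Unset Printing Implicit Defensive.
Import GRing.Theory.
Local Open Scope group_scope.

Notation V n := ('rV['F_2]_n).

Definition transl (n : nat) (v : V n) : {perm V n} :=
  perm (addIr v).

Definition transl_group (n : nat) : {set {perm V n}} :=
  [set transl v | v in [set: V n]].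

Definition regular_on (n : nat) (R : {set {perm V n}}) : bool :=
  [transitive R, on [set: V n] | 'P] && [forall x : V n, 'C_R[x | 'P] == 1].

From HB Require Import structures.
From mathcomp Require Import all_boot all_order all_algebra all_fingroup all_solvable.
From mathcomp Require Import ring zify.
Set Implicit Arguments. Unset Strict Implicit. Unset Printing Implicit Defensive.
Import GRing.Theory.
Local Open Scope ring_scope.

(* For linear forms a, b on V and d in ker a ∩ ker b, the
   "twisted translations" x |-> x + v + B(v, x) d, where
   B(v, x) = a(v) b(x) + b(v) a(x), form an elementary abelian regular group
   R(a, b, d).  When a, b are independent and d != 0 (an admissible triple),
   R(a, b, d) ∩ T consists of the translations by ker a ∩ ker b, of index 4.

   Conversely let R be such a group, r_v its element with
   r_v(0) = v and W = {w | σ_w ∈ R}, a subgroup of index 4.  The defect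
   D(v, x) = r_v(x) + x + v lies in W, depends only on v, x modulo W, and is
   symmetric, vanishing at 0 and invariant under x |-> x + v; coordinates
   a, b on V / W ≅ F_2^2 then give D(v, x) = B(v, x) D(p, q), i.e.
   R = R(a, b, D(p, q)).

   Counting.  R(a', b', d') = R(a, b, d) iff d' = d and a' != b' lie in
   {a, b, a + b}, so each group comes from 6 of the
   (2^n - 1)(2^n - 2)(2^(n-2) - 1) admissible triples. *)

Lemma natrF2 k : (k%:R : 'F_2) = (odd k)%:R.
Proof. by apply: val_inj; rewrite /= !Zp_nat /= modn2; case: (odd k). Qed.

Lemma F2_cases (x : 'F_2) : x = 0 \/ x = 1.
Proof. by case: x => -[|[|m]] // lt_m2; [left | right]; apply: val_inj. Qed.

Ltac ring2 := ring: (natrF2 2 : 2 = 0) (natrF2 3 : 3 = 1) (natrF2 4 : 4 = 0)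
  (natrF2 5 : 5 = 1) (natrF2 6 : 6 = 0) (natrF2 7 : 7 = 1) (natrF2 8 : 8 = 0).

Ltac char2 := apply/matrixP => ? ?; rewrite !mxE; ring2.

Lemma addvv (M : lmodType 'F_2) (x : M) : x + x = 0.
Proof. by rewrite -mulr2n -scaler_nat (natrF2 2) scale0r. Qed.

Lemma addv_eq0 (M : lmodType 'F_2) (u w : M) : (u + w == 0) = (u == w).
Proof. by rewrite -(inj_eq (addIr w)) -addrA addvv addr0 add0r. Qed.

Lemma scaleF2_inj (M : lmodType 'F_2) (s t : 'F_2) (d : M) :
  d != 0 -> s *: d = t *: d -> s = t.
Proof.
move=> nz_d /eqP; rewrite -subr_eq0 -scalerBl scaler_eq0 (negbTE nz_d) orbF.
by rewrite subr_eq0 => /eqP.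
Qed.

(** * Linear forms on V = F_2^n *)

Definition lform n (a : 'cV['F_2]_n) (x : V n) : 'F_2 := (x *m a) 0 0.
Arguments lform : simpl never.

Section LinearForms.
Variable n : nat.
Implicit Types (a b : 'cV['F_2]_n) (x y : V n).

Lemma lformDr a x y : lform a (x + y) = lform a x + lform a y.
Proof. by rewrite /lform mulmxDl mxE. Qed.
Lemma lform0r a : lform a 0 = 0.
Proof. by rewrite /lform mul0mx mxE. Qed.
Lemma lformZr a c x : lform a (c *: x) = c * lform a x.
Proof. by rewrite /lform -scalemxAl mxE. Qed.
Lemma lformDl a b x : lform (a + b) x = lform a x + lform b x.
Proof. by rewrite /lform mulmxDr mxE. Qed.
Lemma lformZl a c x : lform (c *: a) x = c * lform a x.
Proof. by rewrite /lform -scalemxAr mxE. Qed.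
Lemma lform0l x : lform 0 x = 0.
Proof. by rewrite /lform mulmx0 mxE. Qed.
Lemma lform_delta a i : lform a (delta_mx 0 i) = a i 0.
Proof. by rewrite /lform -rowE mxE. Qed.

Lemma lform_inj a b : (forall x, lform a x = lform b x) -> a = b.
Proof. by move=> Eab; apply/matrixP => i j; rewrite (ord1 j) -!lform_delta. Qed.

Lemma additive_lform (f : V n -> 'F_2) :
  {morph f : x y / x + y} -> exists a, forall x, lform a x = f x.
Proof.
move=> fD; exists (\col_i f (delta_mx 0 i)) => x.
have f0 : f 0 = 0 by apply: (addrI (f 0)); rewrite -fD !addr0.
rewrite {1 2}(row_sum_delta x) (big_morph _ (lformDr _) (lform0r _)).
rewrite (big_morph f fD f0); apply: eq_bigr => j _; rewrite lformZr lform_delta mxE.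
by case: (F2_cases (x 0 j)) => ->; rewrite ?scale0r ?scale1r ?mul0r ?mul1r ?f0.
Qed.

Lemma lform_nz a : a != 0 -> exists x, lform a x = 1.
Proof.
move=> nz_a; have [x /eqP ax1 | no1] := pickP (fun x => lform a x == 1); first by exists x.
case/eqP: nz_a; apply: lform_inj => x; rewrite lform0l.
by have := no1 x; case: (F2_cases (lform a x)) => ->.
Qed.

Lemma lform_neq a b : a != b -> exists x, lform a x != lform b x.
Proof.
move=> neq_ab; have [x ? | same] := pickP (fun x => lform a x != lform b x).
  by exists x.
by case/eqP: neq_ab; apply: lform_inj => x; apply/eqP/negbFE/same.
Qed.

Lemma lform_separate a b : a != 0 -> a != b ->
  exists x, lform a x = 1 /\ lform b x = 0.
Proof.
move=> /lform_nz[x ax] /lform_neq[y ab_y].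
case: (F2_cases (lform b x)) => bx; first by exists x.
case: (F2_cases (lform b y)) => by_.
  by exists y; split=> //; move: ab_y; rewrite by_; case: (F2_cases (lform a y)) => ->.
exists (x + y); rewrite !lformDr ax bx by_; move: ab_y; rewrite by_.
by case: (F2_cases (lform a y)) => -> //; split; ring2.
Qed.

End LinearForms.

Lemma card_disjointU (T : finType) (A B : {set T}) :
  A :&: B = set0 -> #|A :|: B| = (#|A| + #|B|)%N.
Proof. by move=> AB0; rewrite -cardsUI AB0 cards0 addn0. Qed.

Section Cosets.
Variables (n : nat) (W : {set V n}).
Hypothesis WD : addr_closed W.

Definition vcoset (c : V n) : {set V n} := [set x | x + c \in W].

Lemma card_vcoset c : #|vcoset c| = #|W|.
Proof.
have -> : vcoset c = [set x + c | x in W].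
  apply/setP => x; rewrite inE; apply/idP/imsetP => [Wxc|[y Wy ->]].
    by exists (x + c); rewrite // -addrA addvv addr0.
  by rewrite -addrA addvv addr0.
by rewrite card_imset //; apply: addIr.
Qed.

Lemma vcoset_disjoint c1 c2 : c1 + c2 \notin W -> vcoset c1 :&: vcoset c2 = set0.
Proof.
move=> W'c; apply/setP => x; rewrite !inE; apply/negP => /andP[W1 W2].
have E : x + c1 + (x + c2) = c1 + c2 by char2.
by move: (WD.2 _ _ W1 W2); rewrite E (negbTE W'c).
Qed.

Lemma card_cosets4 p q : p \notin W -> q \notin W -> p + q \notin W ->
  #|vcoset 0 :|: vcoset p :|: vcoset q :|: vcoset (p + q)| = (4 * #|W|)%N.
Proof.
move=> W'p W'q W'pq.
have E1 : p + (p + q) = q by char2.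
have E2 : q + (p + q) = p by char2.
rewrite !card_disjointU; first by rewrite !card_vcoset; lia.
- by rewrite vcoset_disjoint ?add0r.
- by rewrite setIUl !vcoset_disjoint ?add0r ?setU0.
- by rewrite !setIUl !vcoset_disjoint ?add0r ?E1 ?E2 ?setU0.
Qed.

End Cosets.

Definition kerset n (a b : 'cV['F_2]_n) : {set V n} :=
  [set x | (lform a x == 0) && (lform b x == 0)].

Lemma kerset_addr_closed n (a b : 'cV['F_2]_n) : addr_closed (kerset a b).
Proof.
split=> [|x y]; first by rewrite inE !lform0r.
by rewrite !inE !lformDr => /andP[/eqP-> /eqP->] /andP[/eqP-> /eqP->].
Qed.

Lemma cardV n : #|{: V n}| = (2 ^ n)%N.
Proof. by rewrite card_mx card_Fp // mul1n. Qed.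

Lemma expn2_sub2 n : (2 <= n)%N -> (2 ^ n = 2 ^ (n - 2) * 4)%N.
Proof. by move=> n2; rewrite -{1}(subnK n2) expnD. Qed.

Lemma card_kerset n (a b : 'cV['F_2]_n) : (2 <= n)%N -> a != 0 -> b != 0 -> a != b ->
  #|kerset a b| = (2 ^ (n - 2))%N.
Proof.
move=> n2 nz_a nz_b neq_ab.
have [p [ap bp]] := lform_separate nz_a neq_ab.
have [q [bq aq]] : exists q, lform b q = 1 /\ lform a q = 0.
  by apply: lform_separate; rewrite // eq_sym.
have := card_cosets4 (kerset_addr_closed a b) (p := p) (q := q).
rewrite !inE !lformDr ap bp aq bq => /(_ isT isT isT).
have -> : vcoset (kerset a b) 0 :|: vcoset (kerset a b) p :|: vcoset (kerset a b) q
          :|: vcoset (kerset a b) (p + q) = setT.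
  apply/setP => y; rewrite !inE !lformDr !lform0r ap bp aq bq !addr0.
  by case: (F2_cases (lform a y)) => ->; case: (F2_cases (lform b y)) => ->;
    rewrite ?eqxx ?orbT // (natrF2 2).
rewrite cardsT cardV expn2_sub2 // mulnC => /eqP.
by rewrite eqn_mul2l => /eqP.
Qed.

(** * The groups R(a, b, d) *)

Definition admissible n (a b : 'cV['F_2]_n) (d : V n) : bool :=
  [&& a != 0, b != 0, a != b, d != 0, lform a d == 0 & lform b d == 0].

Section TwistTranslations.
Variables (n : nat) (a b : 'cV['F_2]_n) (d : V n).
Implicit Types (u v x y : V n).

Definition bform v x : 'F_2 := lform a v * lform b x + lform b v * lform a x.

Lemma bformDr v x y : bform v (x + y) = bform v x + bform v y.
Proof. by rewrite /bform !lformDr; ring. Qed.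
Lemma bformDl u v x : bform (u + v) x = bform u x + bform v x.
Proof. by rewrite /bform !lformDr; ring. Qed.
Lemma bformZr v c x : bform v (c *: x) = c * bform v x.
Proof. by rewrite /bform !lformZr; ring. Qed.
Lemma bformZl c v x : bform (c *: v) x = c * bform v x.
Proof. by rewrite /bform !lformZr; ring. Qed.
Lemma bformC v x : bform v x = bform x v.
Proof. by rewrite /bform; ring. Qed.
Lemma bformvv v : bform v v = 0.
Proof. by rewrite /bform; ring2. Qed.
Lemma bform0r v : bform v 0 = 0.
Proof. by rewrite /bform !lform0r; ring. Qed.

(* The vector d when it lies in ker a ∩ ker b, and 0 otherwise: this makes
   the construction below a group for every triple (a, b, d). *)
Definition twist_dir : V n := if (lform a d == 0) && (lform b d == 0) then d else 0.

Lemma twist_dirE : lform a d = 0 -> lform b d = 0 -> twist_dir = d.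
Proof. by rewrite /twist_dir => -> ->; rewrite eqxx. Qed.

Lemma bform_twist_dir v : bform v twist_dir = 0.
Proof.
rewrite /bform /twist_dir; case: ifP => [/andP[/eqP-> /eqP->]|_]; first by ring.
by rewrite !lform0r; ring.
Qed.

Definition twist_fun v x : V n := x + v + bform v x *: twist_dir.

Lemma twist_funK v : involutive (twist_fun v).
Proof. by move=> x; rewrite /twist_fun !bformDr bformZr bform_twist_dir bformvv; char2. Qed.

Definition twist v : {perm V n} := perm (inv_inj (twist_funK v)).

Lemma twistE v x : twist v x = x + v + bform v x *: twist_dir.
Proof. by rewrite permE. Qed.

Lemma twist_at0 v : twist v 0 = v.
Proof. by rewrite twistE bform0r scale0r add0r addr0. Qed.

Lemma twist1 : twist 0 = 1%g.
Proof. by apply/permP => x; rewrite perm1 twistE bformC bform0r scale0r !addr0. Qed.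

Lemma twistM u v : (twist u * twist v)%g = twist (u + v + bform u v *: twist_dir).
Proof.
apply/permP => x; rewrite permM !twistE !bformDr !bformDl bformZr bformZl.
by rewrite (bformC twist_dir) !bform_twist_dir (bformC v u); char2.
Qed.

Definition twist_set : {set {perm V n}} := [set twist v | v in [set: V n]].

Lemma twist_group_set : group_set twist_set.
Proof.
apply/group_setP; split; first by apply/imsetP; exists 0; rewrite ?inE ?twist1.
by move=> _ _ /imsetP[u _ ->] /imsetP[v _ ->]; rewrite twistM imset_f ?inE.
Qed.

Definition twist_group : {group {perm V n}} := Group twist_group_set.

Lemma twist_abelem : abelem 2 twist_group.
Proof.
apply/abelemP => //; split.
  apply/centsP => _ /imsetP[u _ ->] _ /imsetP[v _ ->].
  by rewrite /commute !twistM bformC [u + v]addrC.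
by move=> _ /imsetP[u _ ->]; rewrite expgS expg1 twistM bformvv scale0r addr0 addvv twist1.
Qed.

Lemma twist_regular : regular_on twist_group.
Proof.
apply/andP; split.
  apply/imsetP; exists 0; first by rewrite inE.
  apply/setP => y; rewrite inE; apply/esym/orbitP.
  by exists (twist y); rewrite ?imset_f ?inE //= apermE twist_at0.
apply/forallP => x; rewrite eqEsubset sub1G andbT.
apply/subsetP => _ /setIP[/imsetP[v _ ->] /astab1P /= fix_x].
have Ev : v = bform v x *: twist_dir.
  apply/eqP; rewrite -addv_eq0; apply/eqP/(addrI x).
  by rewrite addrA -twistE addr0; exact: fix_x.
suff v0 : v = 0 by rewrite v0 twist1 inE.
by rewrite Ev {1}Ev bformZl (bformC twist_dir) bform_twist_dir mulr0 scale0r.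
Qed.

End TwistTranslations.

Lemma transl_inj n : injective (@transl n).
Proof. by move=> u v /permP /(_ 0); rewrite !permE !add0r. Qed.

Lemma transl0 n : transl (0 : V n) = 1%g.
Proof. by apply/permP => x; rewrite perm1 permE addr0. Qed.

Lemma translD n (u v : V n) : transl (u + v) = (transl u * transl v)%g.
Proof. by apply/permP => x; rewrite permM !permE addrA. Qed.

Lemma transl_group_set n : group_set (transl_group n).
Proof.
apply/group_setP; split; first by apply/imsetP; exists 0; rewrite ?inE ?transl0.
by move=> _ _ /imsetP[u _ ->] /imsetP[v _ ->]; rewrite -translD imset_f ?inE.
Qed.

Definition transl_grp n : {group {perm V n}} := Group (transl_group_set n).

Lemma index_transl n (R : {group {perm V n}}) (W : {set V n}) :
  R :&: transl_group n = [set transl w | w in W] ->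
  (#|transl_group n : R :&: transl_group n|%g * #|W| = 2 ^ n)%N.
Proof.
move=> RT; have := Lagrange (subsetIr R (transl_grp n)); rewrite /= RT mulnC.
by rewrite !card_imset ?cardsT ?cardV //; apply: transl_inj.
Qed.

Lemma kerset_bform0 n (a b : 'cV['F_2]_n) v x : v \in kerset a b -> bform a b v x = 0.
Proof. by rewrite inE /bform => /andP[/eqP-> /eqP->]; ring. Qed.

Lemma bform0_kerset n (a b : 'cV['F_2]_n) v : a != 0 -> b != 0 -> a != b ->
  (forall x, bform a b v x = 0) -> v \in kerset a b.
Proof.
move=> nz_a nz_b neq_ab Bv0.
have [p [ap bp]] := lform_separate nz_a neq_ab.
have [q [bq aq]] : exists q, lform b q = 1 /\ lform a q = 0.
  by apply: lform_separate; rewrite // eq_sym.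
move: (Bv0 p) (Bv0 q); rewrite /bform ap bp aq bq !mulr0 !mulr1 add0r addr0.
by rewrite inE => -> ->.
Qed.

Section TwistIntersection.
Variables (n : nat) (a b : 'cV['F_2]_n) (d : V n).
Hypothesis adm : admissible a b d.

Lemma twist_transl : twist_group a b d :&: transl_group n = [set transl v | v in kerset a b].
Proof.
case/and5P: adm => nz_a nz_b neq_ab nz_d /andP[/eqP ad /eqP bd].
have dirE := twist_dirE ad bd.
apply/setP => g; apply/setIP/imsetP => [[/imsetP[v _ ->] /imsetP[u _ E]]|[v Kv ->]].
  have Euv : u = v by move/permP: E => /(_ 0); rewrite twist_at0 permE add0r.
  have Kv : v \in kerset a b.
    apply: bform0_kerset => // x; apply: (scaleF2_inj nz_d).
    apply: (addrI (x + v)); rewrite scale0r addr0 -dirE -twistE.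
    by rewrite E permE Euv.
  by exists v; [exact: Kv | rewrite E Euv].
have twist_v : twist a b d v = transl v.
  apply/permP => x; rewrite twistE permE.
  by rewrite kerset_bform0 // scale0r addr0.
by split; [rewrite -twist_v |]; apply: imset_f.
Qed.

Lemma twist_index : (2 <= n)%N ->
  #|transl_group n : twist_group a b d :&: transl_group n|%g = 4%N.
Proof.
case/and5P: adm => nz_a nz_b neq_ab _ _ n2.
have := index_transl twist_transl; rewrite card_kerset // (expn2_sub2 n2).
by rewrite mulnC => /eqP; rewrite eqn_mul2l expn_eq0 /= => /eqP.
Qed.

End TwistIntersection.

Lemma F2_add_eq0 (s t : 'F_2) : s + t = 0 -> s = t.
Proof. by move=> st0; rewrite -[s]addr0 -st0; ring2. Qed.

Section IndexFour.
Variables (n : nat) (W : {set V n}).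
Hypotheses (n2 : (2 <= n)%N) (WD : addr_closed W) (cardW : #|W| = (2 ^ (n - 2))%N).

Lemma index4_cover p q : p \notin W -> q \notin W -> p + q \notin W ->
  forall y, [|| y \in W, y + p \in W, y + q \in W | y + (p + q) \in W].
Proof.
move=> W'p W'q W'pq y.
have : vcoset W 0 :|: vcoset W p :|: vcoset W q :|: vcoset W (p + q) = setT.
  apply/eqP; rewrite eqEcard subsetT cardsT cardV card_cosets4 //.
  by rewrite cardW (expn2_sub2 n2) mulnC leqnn.
by move/setP => /(_ y); rewrite !inE addr0 -!orbA.
Qed.

Lemma index4_basis : exists p q, [/\ p \notin W, q \notin W & p + q \notin W].
Proof.
have W_gt0 : (0 < 2 ^ (n - 2))%N by rewrite expn_gt0.
have [p W'p | allW] := pickP [predC W]; last first.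
  have : (#|{: V n}| <= #|W|)%N.
    by apply/subset_leq_card/subsetP => x _; move: (allW x) => /= /negbFE.
  by rewrite cardW cardV (expn2_sub2 n2); lia.
have [q /andP[W'q W'qp] | allq] := pickP [pred q | (q \notin W) && (q + p \notin W)].
  by exists p, q; rewrite addrC.
have : (#|{: V n}| <= #|vcoset W 0 :|: vcoset W p|)%N.
  apply/subset_leq_card/subsetP => y _; rewrite !inE addr0.
  by move: (allq y) => /= /negbT; rewrite negb_and !negbK.
rewrite card_disjointU ?vcoset_disjoint ?add0r // !card_vcoset cardW cardV.
by rewrite (expn2_sub2 n2); lia.
Qed.

Variables p q : V n.
Hypotheses (W'p : p \notin W) (W'q : q \notin W) (W'pq : p + q \notin W).

Lemma index4_coord0 s t : s *: p + t *: q \in W -> s = 0 /\ t = 0.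
Proof.
case: (F2_cases s) => ->; case: (F2_cases t) => ->;
  rewrite ?scale0r ?scale1r ?addr0 ?add0r // => W_.
- by move: W'q; rewrite W_.
- by move: W'p; rewrite W_.
- by move: W'pq; rewrite W_.
Qed.

Lemma index4_forms : exists a b : 'cV['F_2]_n, forall y s t,
  (y + s *: p + t *: q \in W) = (s == lform a y) && (t == lform b y).
Proof.
pose coord y := odflt (0, 0) [pick st : 'F_2 * 'F_2 | y + st.1 *: p + st.2 *: q \in W].
have coordP y : y + (coord y).1 *: p + (coord y).2 *: q \in W.
  rewrite /coord; case: pickP => [//|none].
  case/or4P: (index4_cover W'p W'q W'pq y) => W_.
  - by move: (none (0, 0)); rewrite /= !scale0r !addr0 W_.
  - by move: (none (1, 0)); rewrite /= scale1r scale0r addr0 W_.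
  - by move: (none (0, 1)); rewrite /= scale1r scale0r addr0 W_.
  - by move: (none (1, 1)); rewrite /= !scale1r -addrA W_.
have coordE y s t : (y + s *: p + t *: q \in W) = ((s, t) == coord y).
  apply/idP/eqP => [W_|E]; last by have := coordP y; rewrite -E.
  have := WD.2 _ _ (coordP y) W_.
  have -> : y + (coord y).1 *: p + (coord y).2 *: q + (y + s *: p + t *: q)
            = ((coord y).1 + s) *: p + ((coord y).2 + t) *: q by char2.
  case/index4_coord0 => /F2_add_eq0 E1 /F2_add_eq0 E2.
  by rewrite -E1 -E2; case: (coord y).
have coordD x y :
    coord (x + y) = ((coord x).1 + (coord y).1, (coord x).2 + (coord y).2).
  apply/esym/eqP; rewrite -coordE.
  have -> : x + y + ((coord x).1 + (coord y).1) *: p + ((coord x).2 + (coord y).2) *: q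
    = (x + (coord x).1 *: p + (coord x).2 *: q) + (y + (coord y).1 *: p + (coord y).2 *: q).
    by char2.
  exact: WD.2 _ _ (coordP x) (coordP y).
have [a aE] : exists a, forall y, lform a y = (coord y).1.
  by apply: additive_lform => x y; rewrite coordD.
have [b bE] : exists b, forall y, lform b y = (coord y).2.
  by apply: additive_lform => x y; rewrite coordD.
exists a, b => y s t; rewrite coordE aE bE.
by case: (coord y).
Qed.

End IndexFour.

Lemma alternating_plane (M N : lmodType 'F_2) (f : M -> M -> N) (p q : M) :
    (forall x, f 0 x = 0) -> (forall v x, f v x = f x v) ->
    (forall v x, f v (x + v) = f v x) ->
  forall s t s' t' : 'F_2,
    f (s *: p + t *: q) (s' *: p + t' *: q) = (s * t' + t * s') *: f p q.
Proof.
move=> f0l fC fS.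
have f0r v : f v 0 = 0 by rewrite fC f0l.
have fvv v : f v v = 0 by rewrite -{2}(add0r v) fS f0r.
move=> s t s' t'.
case: (F2_cases s) => ->; case: (F2_cases t) => ->;
case: (F2_cases s') => ->; case: (F2_cases t') => ->;
rewrite ?scale0r ?scale1r ?addr0 ?add0r ?mul0r ?mul1r ?addr0 ?add0r
        ?(natrF2 2 : 1 + 1 = 0) ?scale0r ?scale1r ?f0l ?f0r ?fvv //.
- by rewrite fS fC.
- by rewrite addrC fS.
- by rewrite fC fS fC.
- by rewrite fC addrC fS.
Qed.

(** * Elementary abelian regular subgroups of Sym(V) *)

Section RegularElementary.
Variables (n : nat) (R : {group {perm V n}}).
Hypotheses (R_abelem : abelem 2 R) (R_regular : regular_on R).

Lemma R_comm r s : r \in R -> s \in R -> (r * s = s * r)%g.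
Proof. by case/abelemP: R_abelem => // /centsP cRR _ Rr Rs; apply: cRR. Qed.

Lemma R_invol r x : r \in R -> r (r x) = x.
Proof.
case/abelemP: R_abelem => // _ sqR Rr.
by have := sqR r Rr; rewrite expgS expg1 -permM => ->; rewrite perm1.
Qed.

(* The element of R mapping 0 to v; by regularity there is exactly one. *)
Definition rep (v : V n) : {perm V n} := odflt 1%g [pick r in R | r 0 == v].

Lemma rep_spec v : rep v \in R /\ rep v 0 = v.
Proof.
case/andP: R_regular => R_trans _.
have : v \in orbit 'P R 0 by rewrite (atransP R_trans) ?inE.
case/orbitP => r Rr; rewrite /= apermE => rv.
by rewrite /rep; case: pickP => [s /andP[Rs /eqP sv] //|/(_ r)]; rewrite Rr rv eqxx.
Qed.

Lemma repR v : rep v \in R. Proof. by case: (rep_spec v). Qed.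
Lemma rep_at0 v : rep v 0 = v. Proof. by case: (rep_spec v). Qed.

Lemma rep_uniq r : r \in R -> rep (r 0) = r.
Proof.
case/andP: R_regular => _ /forallP /(_ 0) /eqP stab0 Rr.
have : (rep (r 0) * r^-1)%g \in ('C_R[0 | 'P])%g.
  rewrite inE groupM ?groupV ?repR //=; apply/astab1P.
  by rewrite /= apermE permM rep_at0 -permM mulgV perm1.
by rewrite stab0 inE -eq_mulgV1 => /eqP.
Qed.

Lemma rep1 : rep 0 = 1%g.
Proof. by rewrite -{1}(perm1 0) rep_uniq. Qed.

Lemma rep_sym u v : rep v u = rep u v.
Proof.
have := R_comm (repR u) (repR v); move/permP => /(_ 0).
by rewrite !permM !rep_at0.
Qed.

Lemma rep_invol v x : rep v (rep v x) = x.
Proof. exact: R_invol (repR v). Qed.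

Lemma rep_vv v : rep v v = 0.
Proof. by have := rep_invol v 0; rewrite rep_at0. Qed.

Definition transl_part : {set V n} := [set w | transl w \in R].

Lemma transl_part_addr_closed : addr_closed transl_part.
Proof.
split=> [|x y]; first by rewrite inE transl0.
by rewrite !inE translD; apply: groupM.
Qed.

Lemma R_transl_part : R :&: transl_group n = [set transl w | w in transl_part].
Proof.
apply/setP => g; apply/setIP/imsetP => [[Rg /imsetP[v _ gv]]|[w Ww ->]].
  by exists v; rewrite // inE -gv.
by split; [rewrite inE in Ww | apply: imset_f].
Qed.

(* Translations in R are central, so they commute with every rep v. *)
Lemma repDr v x w : w \in transl_part -> rep v (x + w) = rep v x + w.
Proof.
rewrite inE => Rw; have := R_comm Rw (repR v); move/permP => /(_ x).
by rewrite !permM !permE.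
Qed.

Lemma repDl v x w : w \in transl_part -> rep (v + w) x = rep v x + w.
Proof.
rewrite inE => Rw; have := rep_uniq (groupM (repR v) Rw).
by rewrite permM rep_at0 permE => ->; rewrite permM permE.
Qed.

Lemma rep_cosets v x y : rep v x + rep v y \in transl_part -> x + y \in transl_part.
Proof.
move=> Wxy; have E : rep v (y + (rep v x + rep v y)) = rep v x by rewrite repDr //; char2.
rewrite -{1}(perm_inj E).
by have -> : y + (rep v x + rep v y) + y = rep v x + rep v y by char2.
Qed.

Definition defect v x : V n := rep v x + x + v.

Lemma defect0l x : defect 0 x = 0.
Proof. by rewrite /defect rep1 perm1; char2. Qed.

Lemma defectC v x : defect v x = defect x v.
Proof. by rewrite /defect rep_sym; char2. Qed.

Lemma defect_cosets v x v' x' : v + v' \in transl_part -> x + x' \in transl_part ->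
  defect v x = defect v' x'.
Proof.
move=> Wv Wx; have -> : v = v' + (v + v') by char2.
have -> : x = x' + (x + x') by char2.
by rewrite /defect repDl // repDr //; char2.
Qed.

Lemma defect_Wl v x : v \in transl_part -> defect v x = 0.
Proof. by move=> Wv; rewrite /defect -{1}(add0r v) repDl // rep1 perm1; char2. Qed.

Lemma defect_Wsum v x : x + v \in transl_part -> defect v x = 0.
Proof.
move=> Wxv; rewrite /defect; have -> : x = v + (x + v) by char2.
by rewrite repDr // rep_vv; char2.
Qed.

Section TranslationsOfIndexFour.
Hypotheses (n2 : (2 <= n)%N)
           (R_index : #|transl_group n : R :&: transl_group n|%g = 4%N).

Lemma card_transl_part : #|transl_part| = (2 ^ (n - 2))%N.
Proof.
have := index_transl R_transl_part; rewrite R_index (expn2_sub2 n2) mulnC.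
by move/eqP; rewrite eqn_mul2r /= => /eqP.
Qed.

(* The defect takes values in W: when none of v, x, x + v lies in W, the
   point r_v(x) can only lie in the fourth coset W + x + v. *)
Lemma defect_in_W v x : defect v x \in transl_part.
Proof.
have W0 := transl_part_addr_closed.1.
have [Wv | W'v] := boolP (v \in transl_part); first by rewrite defect_Wl.
have [Wx | W'x] := boolP (x \in transl_part); first by rewrite defectC defect_Wl.
have [Wxv | W'xv] := boolP (x + v \in transl_part); first by rewrite defect_Wsum.
have W'vx : v + x \notin transl_part by rewrite addrC.
have cover := index4_cover n2 transl_part_addr_closed card_transl_part W'v W'x W'vx.
case/or4P: (cover (rep v x)) => W_.
- by case/negP: W'xv; apply: (rep_cosets (v := v)); rewrite rep_vv addr0.
- by case/negP: W'x; rewrite -(addr0 x); apply: (rep_cosets (v := v)); rewrite rep_at0.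
- case/negP: W'v; rewrite -(addr0 v); apply: (rep_cosets (v := x)).
  by rewrite rep_at0 rep_sym.
- by rewrite /defect -addrA (addrC x).
Qed.

(* Since r_v is an involution, D(v, x + v) = D(v, x). *)
Lemma defect_shift v x : defect v (x + v) = defect v x.
Proof.
have E : rep v (x + v) = x + defect v x.
  have -> : x + v = rep v x + defect v x by rewrite /defect; char2.
  by rewrite repDr ?defect_in_W // rep_invol.
by rewrite {1}/defect E; char2.
Qed.

Lemma defect_bform p q a b :
    (forall y s t, (y + s *: p + t *: q \in transl_part) =
                   (s == lform a y) && (t == lform b y)) ->
  forall v x, defect v x = bform a b v x *: defect p q.
Proof.
move=> coords v x.
have class y : y + (lform a y *: p + lform b y *: q) \in transl_part.
  by rewrite addrA coords !eqxx.
rewrite (defect_cosets (class v) (class x)) alternating_plane //.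
- exact: defect0l.
- exact: defectC.
- exact: defect_shift.
Qed.

Theorem classification : exists a b d, admissible a b d /\ R = twist_group a b d.
Proof.
have W_D := transl_part_addr_closed; have cardW := card_transl_part.
have [p [q [W'p W'q W'pq]]] := index4_basis n2 W_D cardW.
have [a [b coords]] := index4_forms n2 W_D cardW W'p W'q W'pq.
have formsW w : w \in transl_part -> lform a w = 0 /\ lform b w = 0.
  by move=> Ww; move: (coords w 0 0); rewrite !scale0r !addr0 Ww => /esym/andP[/eqP<- /eqP<-].
have [ap bp] : lform a p = 1 /\ lform b p = 0.
  have := coords p 1 0; have -> : p + 1 *: p + 0 *: q = 0 by char2.
  by rewrite W_D.1 => /esym/andP[/eqP<- /eqP<-].
have [aq bq] : lform a q = 0 /\ lform b q = 1.
  have := coords q 0 1; have -> : q + 0 *: p + 1 *: q = 0 by char2.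
  by rewrite W_D.1 => /esym/andP[/eqP<- /eqP<-].
pose d := defect p q.
have [ad bd] := formsW d (defect_in_W p q).
have rep_twist v : rep v = twist a b d v.
  apply/permP => x; rewrite twistE (twist_dirE ad bd) -(defect_bform coords) /defect.
  by char2.
have nz_d : d != 0.
  apply: contra W'p => /eqP d0; rewrite inE.
  suff -> : transl p = rep p by apply: repR.
  by apply/permP => x; rewrite rep_twist twistE permE (twist_dirE ad bd) d0 scaler0 addr0.
exists a, b, d; split.
  have nz_a : a != 0 by apply/eqP => a0; move: ap; rewrite a0 lform0l => /eqP.
  have nz_b : b != 0 by apply/eqP => b0; move: bq; rewrite b0 lform0l => /eqP.
  have neq_ab : a != b by apply/eqP => ab; move: ap; rewrite ab bp => /eqP.
  by rewrite /admissible nz_a nz_b neq_ab nz_d ad bd !eqxx.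
apply/val_inj/setP => g /=; apply/idP/imsetP => [Rg|[v _ ->]]; last by rewrite -rep_twist repR.
by exists (g 0); rewrite ?inE // -rep_twist rep_uniq.
Qed.

End TranslationsOfIndexFour.
End RegularElementary.

(** * When do two admissible triples give the same group? *)

Definition plane_pts n (a b : 'cV['F_2]_n) : {set 'cV['F_2]_n} := [set a; b; a + b].

Section Fibers.
Variables (n : nat) (a b : 'cV['F_2]_n) (d : V n).
Hypothesis adm : admissible a b d.

Lemma bform_plane_pts c v : c != 0 -> (forall x, lform c x = bform a b v x) ->
  c \in plane_pts a b.
Proof.
move=> nz_c cE; have {}cE : c = lform a v *: b + lform b v *: a.
  by apply: lform_inj => x; rewrite cE lformDl !lformZl /bform.
move: nz_c; rewrite cE !inE.
by case: (F2_cases (lform a v)) => ->; case: (F2_cases (lform b v)) => ->;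
  rewrite ?scale0r ?scale1r ?addr0 ?add0r ?(addrC b) ?eqxx ?orbT.
Qed.

Lemma twist_group_inj a' b' d' : admissible a' b' d' ->
    twist_group a' b' d' = twist_group a b d ->
  [/\ d' = d, a' \in plane_pts a b, b' \in plane_pts a b & a' != b'].
Proof.
case/and5P: adm => nz_a nz_b neq_ab nz_d /andP[/eqP ad /eqP bd].
case/and5P => nz_a' nz_b' neq_ab' nz_d' /andP[/eqP ad' /eqP bd'] E.
have EB v x : bform a' b' v x *: d' = bform a b v x *: d.
  have : twist a' b' d' v \in twist_group a b d by rewrite -E imset_f ?inE.
  case/imsetP => u _ Eu; have Euv : u = v by rewrite -(twist_at0 a b d u) -Eu twist_at0.
  move/permP: Eu => /(_ x); rewrite !twistE !twist_dirE // Euv -!addrA.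
  by move/addrI/addrI.
have [p [ap bp]] := lform_separate nz_a neq_ab.
have [q [bq aq]] : exists q, lform b q = 1 /\ lform a q = 0.
  by apply: lform_separate; rewrite // eq_sym.
have dd' : d' = d.
  have := EB p q; rewrite {2}/bform ap bp aq bq mulr1 mulr0 addr0 scale1r.
  by case: (F2_cases (bform a' b' p q)) => ->; rewrite ?scale1r // scale0r => d0;
    move: nz_d; rewrite -d0 eqxx.
have {EB} EB v x : bform a' b' v x = bform a b v x.
  by apply: (scaleF2_inj nz_d); rewrite -dd' EB dd'.
split => //.
- have [v [bv av]] : exists v, lform b' v = 1 /\ lform a' v = 0.
    by apply: lform_separate; rewrite // eq_sym.
  by apply: (bform_plane_pts (v := v) nz_a') => x; rewrite -EB /bform av bv; ring.
- have [v [av bv]] := lform_separate nz_a' neq_ab'.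
  by apply: (bform_plane_pts (v := v) nz_b') => x; rewrite -EB /bform av bv; ring.
Qed.

Lemma twist_group_plane a' b' : a' \in plane_pts a b -> b' \in plane_pts a b -> a' != b' ->
  admissible a' b' d /\ twist_group a' b' d = twist_group a b d.
Proof.
case/and5P: adm => nz_a nz_b neq_ab nz_d /andP[/eqP ad /eqP bd] Pa' Pb' neq_ab'.
have nzP c : c \in plane_pts a b -> c != 0.
  by rewrite !inE -orbA => /or3P[] /eqP->; rewrite ?addv_eq0.
have dP c : c \in plane_pts a b -> lform c d = 0.
  by rewrite !inE -orbA => /or3P[] /eqP->; rewrite ?lformDl ?ad ?bd ?addr0.
have EB v x : bform a' b' v x = bform a b v x.
  move: Pa' Pb' neq_ab'; rewrite !inE -!orbA.
  by case/or3P => /eqP->; case/or3P => /eqP->; rewrite ?eqxx // => _;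
    rewrite /bform ?lformDl; ring2.
split; first by rewrite /admissible !nzP // neq_ab' nz_d !dP.
apply/val_inj => /=; apply: eq_imset => v; apply/permP => x.
by rewrite !twistE EB (twist_dirE (dP _ Pa') (dP _ Pb')) (twist_dirE ad bd).
Qed.

End Fibers.

(** * Counting *)

Notation triple n := ('cV['F_2]_n * 'cV['F_2]_n * V n)%type.

Definition adm_triple n (t : triple n) : bool := admissible t.1.1 t.1.2 t.2.
Definition twist_of n (t : triple n) : {group {perm V n}} := twist_group t.1.1 t.1.2 t.2.

Lemma card_uniform_fibers (T U : finType) (f : T -> U) (A : {set T}) k :
  (forall x, x \in A -> #|[set y in A | f y == f x]| = k) -> #|A| = (#|f @: A| * k)%N.
Proof.
move=> fibers; rewrite -sum1_card (partition_big_imset f) /= -sum_nat_const.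
apply: eq_bigr => _ /imsetP[x Ax ->]; rewrite -(fibers x Ax) -sum1_card.
by apply: eq_bigl => y; rewrite inE.
Qed.

Lemma sum_nat_cond_const (T : finType) (P : pred T) c :
  (\sum_(i | P i) c)%N = (#|[set i | P i]| * c)%N.
Proof. by rewrite -sum_nat_const; apply: eq_bigl => i; rewrite inE. Qed.

Lemma card_plane_pts n (a b : 'cV['F_2]_n) : a != 0 -> b != 0 -> a != b ->
  #|plane_pts a b| = 3%N.
Proof.
move=> nz_a nz_b neq_ab; rewrite /plane_pts setUC.
have ab_a : (a + b == a) = (b == 0) by rewrite -{2}(addr0 a) (inj_eq (addrI a)).
have ab_b : (a + b == b) = (a == 0) by rewrite -{2}(add0r b) (inj_eq (addIr b)).
by rewrite cardsU1 cards2 neq_ab !inE negb_or ab_a ab_b nz_a nz_b.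
Qed.

(* Each group R(a, b, d) arises from exactly 6 admissible triples, namely the
   (a', b', d) with a' != b' among the nonzero vectors of span(a, b). *)
Lemma card_twist_fiber n (t : triple n) : t \in [set t | adm_triple t] ->
  #|[set t' in [set t | adm_triple t] | twist_of t' == twist_of t]| = 6%N.
Proof.
case: t => [[a b] d]; rewrite inE => adm.
pose P := plane_pts a b; pose pairs := setX P P :\: [set (c, c) | c in P].
have -> : [set t' in [set t | adm_triple t] | twist_of t' == twist_of (a, b, d)]
          = [set (ab, d) | ab in pairs].
  apply/setP => [[[a' b'] d']]; rewrite !inE; apply/andP/imsetP.
    move=> [adm' /eqP E]; have /= [-> Pa' Pb' neq_ab'] := twist_group_inj adm adm' E.
    exists (a', b') => //.
    rewrite in_setD in_setX Pa' Pb' !andbT.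
    by move: neq_ab'; apply: contra => /imsetP[c _ [-> ->]].
  case=> [[a'' b''] pairs_ab [-> -> ->]].
  move: pairs_ab; rewrite in_setD in_setX => /andP[off_diag /andP[Pa Pb]].
  have neq_ab'' : a'' != b'' by move: off_diag; apply: contra => /eqP->; apply: imset_f.
  by have [adm'' E] := twist_group_plane adm Pa Pb neq_ab''; split => //; apply/eqP.
case/and5P: adm => nz_a nz_b neq_ab _ _.
have diag_inj : injective (fun c : 'cV['F_2]_n => (c, c)) by move=> x y [].
rewrite card_imset; last by move=> x y [].
rewrite cardsD cardsX card_plane_pts //.
have -> : setX P P :&: [set (c, c) | c in P] = [set (c, c) | c in P].
  by apply/setIidPr/subsetP => _ /imsetP[c Pc ->]; rewrite in_setX Pc.
by rewrite (card_imset _ diag_inj) card_plane_pts.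
Qed.

Lemma card_nz n : #|[set a : 'cV['F_2]_n | a != 0]| = (2 ^ n - 1)%N.
Proof.
have := cardsD1 0 [set: 'cV['F_2]_n].
rewrite cardsT card_mx card_Fp // muln1 inE add1n => ->; rewrite subn1 /=.
by apply: eq_card => a; rewrite !inE andbT.
Qed.

Lemma card_nz_neq n (a : 'cV['F_2]_n) : a != 0 ->
  #|[set b : 'cV['F_2]_n | (b != 0) && (a != b)]| = (2 ^ n - 2)%N.
Proof.
move=> nz_a; have -> : [set b | (b != 0) && (a != b)] = [set b | b != 0] :\ a.
  by apply/setP => b; rewrite !inE (eq_sym a) andbC.
have := cardsD1 a [set b | b != 0]; rewrite card_nz inE nz_a add1n.
by move/(congr1 predn) => /= <-; rewrite -subnS.
Qed.

(* (2^n - 1) choices of a, (2^n - 2) of b, and 2^(n-2) - 1 of d. *)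
Lemma card_adm_triples n : (2 <= n)%N ->
  #|[set t : triple n | adm_triple t]| = ((2 ^ n - 1) * (2 ^ n - 2) * (2 ^ (n - 2) - 1))%N.
Proof.
move=> n2; rewrite -sum1dep_card.
pose indep (ab : 'cV['F_2]_n * 'cV['F_2]_n) := (ab.1 != 0) && ((ab.2 != 0) && (ab.1 != ab.2)).
rewrite (eq_bigl (fun t => indep t.1 && (t.2 \in kerset t.1.1 t.1.2 :\ 0))); last first.
  by case=> [[a b] d]; rewrite /adm_triple /admissible /indep /= !inE !andbA.
rewrite -(pair_big_dep indep (fun ab d => d \in kerset ab.1 ab.2 :\ 0) (fun _ _ => 1%N)) /=.
rewrite (eq_bigr (fun _ => (2 ^ (n - 2) - 1)%N)); last first.
  move=> [a b] /and3P[nz_a nz_b neq_ab] /=; rewrite sum1_card.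
  have := cardsD1 0 (kerset a b); rewrite card_kerset // inE !lform0r eqxx add1n => ->.
  by rewrite subn1.
rewrite sum_nat_cond_const -sum1dep_card.
rewrite -(pair_big_dep (fun a => a != 0) (fun a b => (b != 0) && (a != b)) (fun _ _ => 1%N)) /=.
rewrite (eq_bigr (fun _ => (2 ^ n - 2)%N)); last by move=> a nz_a; rewrite sum1dep_card card_nz_neq.
by rewrite sum_nat_cond_const card_nz.
Qed.

Local Close Scope ring_scope.

Theorem mainTheorem9 (n : nat) (hn : 2 < n) :
  #|[set R : {group {perm V n}} |
      [&& abelem 2 R, regular_on R & (#|transl_group n : R :&: transl_group n|)%g == 4]]|
  = ((2 ^ (n - 2) - 1) * (2 ^ (n - 1) - 1) * (2 ^ n - 1)) %/ 3.
Proof.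
have n2 : (2 <= n)%N := ltnW hn.
set S := [set R : {group {perm V n}} | _].
have S_twist : S = @twist_of n @: [set t : triple n | adm_triple t].
  apply/setP => R; rewrite inE; apply/and3P/imsetP => [[abR regR /eqP idxR]|[t adm ->]].
    have [a [b [d [adm ->]]]] := classification abR regR n2 idxR.
    by exists (a, b, d); rewrite ?inE.
  by rewrite inE in adm; rewrite twist_abelem twist_regular twist_index.
have := card_adm_triples n2; rewrite (card_uniform_fibers (@card_twist_fiber n)) -S_twist.
have -> : (2 ^ n - 2 = 2 * (2 ^ (n - 1) - 1))%N.
  by rewrite mulnBr muln1 -expnS; congr (2 ^ _ - _); lia.
move=> card6; rewrite -(mulnK #|S| (isT : 0 < 3)); congr (_ %/ 3).
by nia.
Qed.
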